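(* Let $G$ be a finite simple undirected graph on $n\ge1$ vertices. Then every coalition game $\mathcal G$ over $G$ satisfies $\dfrac{\rho^f(\mathcal G)}{\rho(\mathcal G)}\le 2\sqrt n$.
   Context: Coalition game over $G=(V,E)$: a valuation $v:2^V\to\mathbb Z_{\ge0}$ with $v(\emptyset)=0$, $v(S)=0$ whenever $G[S]$ is disconnected, $v$ not identically zero. $\rho^f(\mathcal G)=\max\{\sum_S v(S)y_S: y\ge0,\ \sum_{S\ni i}y_S\le1\ \forall i\in V\}$, and $\rho(\mathcal G)$ is the same maximum over $0/1$ vectors $y$ (equivalently, the maximum of $\sum v(S)$ over families of pairwise disjoint subsets of $V$). *)

From HB Require Import structures.
From mathcomp Require Import all_boot all_order all_algebra.
Set Implicit Arguments. Unset Strict Implicit. Unset Printing Implicit Defensive.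
Import Order.TTheory GRing.Theory Num.Theory.
Local Open Scope ring_scope.

Definition induced_rel (V : finType) (e : rel V) (S : {set V}) : rel V :=
  [rel x y | [&& e x y, x \in S & y \in S]].

Definition induced_connected (V : finType) (e : rel V) (S : {set V}) : bool :=
  [forall x in S, forall y in S, connect (induced_rel e S) x y].

Definition rho (V : finType) (v : {set V} -> nat) : nat :=
  \max_(F : {set {set V}} | trivIset F) \sum_(S in F) v S.

Definition frac_value (R : numDomainType) (V : finType)
  (v : {set V} -> nat) (y : {set V} -> R) : R :=
  \sum_(S : {set V}) (v S)%:R * y S.

(* y is feasible for the fractional LP defining rho^f. *)
Definition frac_feasible (R : numDomainType) (V : finType) (y : {set V} -> R) : Prop :=
  (forall S, 0 <= y S) /\ (forall i : V, \sum_(S : {set V} | i \in S) y S <= 1).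

(* Split the coalitions at size sqrt n.  The small ones are handled greedily:
   picking a coalition S of maximal value and discarding every coalition that
   meets S loses fractional weight at most |S| <= sqrt n (each vertex of S
   carries load at most 1), so their fractional value is at most sqrt n * rho.
   Each large coalition has value at most rho and, as the total load
   sum_S |S| y_S is at most n, fractional weight at most n / sqrt n = sqrt n in
   total. *)

From HB Require Import structures.
From mathcomp Require Import all_boot all_order all_algebra.
Set Implicit Arguments.
Unset Strict Implicit.
Unset Printing Implicit Defensive.

Import Order.TTheory GRing.Theory Num.Theory.
Local Open Scope ring_scope.

Section FractionalPacking.
Variables (R : numDomainType) (V : finType) (y : {set V} -> R).
Hypothesis y_ge0 : forall S, 0 <= y S.
Hypothesis y_load : forall i : V, \sum_(S : {set V} | i \in S) y S <= 1.

Lemma frac_weight_meeting_le (A : {set V}) (P : pred {set V}) :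
  \sum_(T | P T && ~~ [disjoint T & A]) y T <= #|A|%:R.
Proof.
apply: (@le_trans _ _ (\sum_(i in A) \sum_(T : {set V} | i \in T) y T)); last first.
  by rewrite -sumr_const; apply: ler_sum => i _; apply: y_load.
rewrite (exchange_big_dep predT) //= big_mkcond /=.
apply: ler_sum => T _; case: ifP => [/andP [_] | _]; last exact: sumr_ge0.
rewrite -setI_eq0 => /set0Pn [i]; rewrite inE => /andP [iT iA].
by rewrite (bigD1 i) /= ?iA ?iT // lerDl; apply: sumr_ge0.
Qed.

Lemma frac_weighted_card_le : \sum_(S : {set V}) #|S|%:R * y S <= #|V|%:R.
Proof.
have -> : \sum_(S : {set V}) #|S|%:R * y S = \sum_(i : V) \sum_(S : {set V} | i \in S) y S.
  rewrite (exchange_big_dep predT) //=; apply: eq_bigr => S _.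
  by rewrite sumr_const mulr_natl.
by rewrite -[#|V|%:R]sumr_const; apply: ler_sum => i _; apply: y_load.
Qed.

Variable v : {set V} -> nat.

Lemma sum_meeting_argmax_le (W : {set {set V}}) (S : {set V}) :
  (forall T, T \in W -> (v T <= v S)%N) ->
  \sum_(T in W | ~~ [disjoint T & S]) (v T)%:R * y T <= #|S|%:R * (v S)%:R.
Proof.
move=> S_max.
apply: (@le_trans _ _ (\sum_(T in W | ~~ [disjoint T & S]) (v S)%:R * y T)).
  by apply: ler_sum => T /andP [TW _]; rewrite ler_wpM2r // ler_nat S_max.
by rewrite -mulr_sumr mulrC ler_wpM2r // frac_weight_meeting_le.
Qed.

Hypothesis v0 : v set0 = 0%N.

(* Greedy: take a set S of maximal value, discard every set meeting S, recurse.
   [v0] is needed because no load constraint bounds [y set0]. *)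
Lemma greedy_packing (c : R) (W : {set {set V}}) :
  (forall S, S \in W -> #|S|%:R <= c) ->
  exists F : {set {set V}}, [/\ trivIset F, F \subset W &
    \sum_(S in W) (v S)%:R * y S <= c * (\sum_(S in F) v S)%:R].
Proof.
have [N] := ubnP #|W|; elim: N W => // N IH W /ltnSE W_N W_c.
have no_packing : \sum_(S in W) (v S)%:R * y S <= 0 ->
    exists F : {set {set V}}, [/\ trivIset F, F \subset W &
      \sum_(S in W) (v S)%:R * y S <= c * (\sum_(S in F) v S)%:R].
  move=> W_0; exists set0; rewrite sub0set big_set0 mulr0; split=> //.
  by apply/trivIsetP => A B; rewrite inE.
have [W_0 | [S0 S0W]] := set_0Vmem W; first by apply: no_packing; rewrite W_0 big_set0.
have [S SW S_max] := @arg_maxnP _ S0 (mem W) v S0W.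
have [S_0 | [x xS]] := set_0Vmem S.
  apply: no_packing; rewrite big1 // => T TW.
  have : (v T <= v S)%N := S_max T TW.
  by rewrite S_0 v0 leqn0 => /eqP ->; rewrite mul0r.
pose W' := [set T in W | [disjoint T & S]].
have SW' : S \notin W'.
  by rewrite inE negb_and -setI_eq0 orbC; apply/orP; left; apply/set0Pn; exists x; rewrite inE xS.
have W'_N : (#|W'| < N)%N.
  apply: leq_trans W_N; apply: proper_card; apply/properP; split; last by exists S.
  by apply/subsetP => T; rewrite inE => /andP [].
have W'_c T : T \in W' -> #|T|%:R <= c by rewrite inE => /andP [/W_c].
have [F' [F'_triv F'_W' F'_sum]] := IH W' W'_N W'_c.
have F'_disj T : T \in F' -> [disjoint T & S].
  by move=> /(subsetP F'_W'); rewrite inE => /andP [].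
exists (S |: F'); split.
- apply/trivIsetP => A B /setU1P [-> | AF] /setU1P [-> | BF]; rewrite ?eqxx //.
  + by rewrite disjoint_sym F'_disj.
  + by rewrite F'_disj.
  + by move/trivIsetP: F'_triv; apply.
- apply/subsetP => T /setU1P [-> // | /(subsetP F'_W')].
  by rewrite inE => /andP [].
rewrite big_setU1 /=; last by apply: contra SW'; apply: (subsetP F'_W').
rewrite natrD mulrDr addrC (bigID [pred T : {set V} | [disjoint T & S]]) /=.
apply: lerD.
  by rewrite (eq_bigl (mem W')) //; move=> T; rewrite /= inE.
apply: le_trans (sum_meeting_argmax_le S_max) _.
by rewrite ler_wpM2r // W_c.
Qed.

End FractionalPacking.

Lemma sum_le_rho (V : finType) (v : {set V} -> nat) (F : {set {set V}}) :
  trivIset F -> (\sum_(S in F) v S <= rho v)%N.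
Proof. by move=> F_triv; apply: (leq_bigmax_cond F F_triv). Qed.

Section SmallAndLargeCoalitions.
Variables (R : realDomainType) (V : finType) (v : {set V} -> nat) (y : {set V} -> R).
Hypothesis y_feas : frac_feasible y.

Lemma frac_value_small_le (c : R) : v set0 = 0%N -> 0 <= c ->
  \sum_(S : {set V} | #|S|%:R <= c) (v S)%:R * y S <= c * (rho v)%:R.
Proof.
move: y_feas => [y_ge0 y_load] v0 c_ge0.
pose W := [set S : {set V} | #|S|%:R <= c].
have W_c S : S \in W -> #|S|%:R <= c by rewrite inE.
have [F [F_triv _ F_sum]] := greedy_packing y_ge0 y_load v0 W_c.
rewrite (eq_bigl (mem W)); last by move=> S; rewrite /= !inE.
by apply: le_trans F_sum _; rewrite ler_wpM2l // ler_nat sum_le_rho.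
Qed.

Lemma frac_value_large_le (c : R) :
  c * \sum_(S : {set V} | ~~ (#|S|%:R <= c)) (v S)%:R * y S <= #|V|%:R * (rho v)%:R.
Proof.
move: y_feas => [y_ge0 y_load].
have v_le_rho S : (v S <= rho v)%N by have := sum_le_rho v (trivIset1 S); rewrite big_set1.
rewrite mulr_sumr.
apply: (@le_trans _ _ (\sum_(S : {set V} | ~~ (#|S|%:R <= c)) (rho v)%:R * (#|S|%:R * y S))).
  apply: ler_sum => S; rewrite -ltNge => /ltW c_le.
  rewrite !mulrA ler_wpM2r // [_ * #|S|%:R]mulrC.
  by apply: le_trans (ler_wpM2r (ler0n _ _) c_le) _; rewrite ler_wpM2l // ler_nat.
rewrite -mulr_sumr mulrC ler_wpM2r //.
apply: le_trans _ (frac_weighted_card_le y_load).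
rewrite [leRHS](bigID [pred S : {set V} | ~~ (#|S|%:R <= c)]) /= lerDl.
by apply: sumr_ge0 => S _; rewrite mulr_ge0.
Qed.

End SmallAndLargeCoalitions.

Theorem lemma5p4 (R : rcfType) (V : finType) (e : rel V)
  (e_sym : symmetric e) (e_irr : irreflexive e) (n_pos : (0 < #|V|)%N)
  (v : {set V} -> nat)
  (v0 : v set0 = 0%N)
  (v_conn : forall S : {set V}, ~~ induced_connected e S -> v S = 0%N)
  (v_nz : exists S : {set V}, v S <> 0%N) :
  forall y : {set V} -> R, frac_feasible y ->
    frac_value v y <= 2 * Num.sqrt (#|V|%:R) * (rho v)%:R.
Proof.
move=> y y_feas; set s := Num.sqrt (#|V|%:R : R).
have s_gt0 : 0 < s by rewrite sqrtr_gt0 ltr0n.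
have s_sq : s * s = #|V|%:R by rewrite -expr2 sqr_sqrtr.
rewrite /frac_value (bigID [pred S : {set V} | #|S|%:R <= s]) /= -mulrA mulr_natl mulr2n.
apply: lerD; first exact: frac_value_small_le (ltW s_gt0).
by rewrite -(ler_pM2l s_gt0) mulrA s_sq frac_value_large_le.
Qed.
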